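(* Let $G$ be a connected graph with $\lambda_{2}(D(G))\leq\frac{17-\sqrt{329}}{2}$. Then $G$ contains none of the following graphs as an induced subgraph: the cycle $C_{4}$, the cycle $C_{5}$, the path $P_{5}$, the graph $H_{1}$ (the cycle $C_4$ with one chord added, i.e. $K_4$ minus an edge), the graph $H_{2}$ (vertices $v_1,\dots,v_5$ with edges $v_1v_2, v_2v_3, v_3v_4, v_2v_5$), and the graph $H_{3}$ (vertices $v_1,\dots,v_5$ with edges $v_1v_2, v_2v_3, v_3v_4, v_1v_5, v_2v_5$).
   Context: All graphs are simple, undirected and connected. $D(G)$ is the distance matrix of $G$ (entries are graph distances), with eigenvalues $\lambda_{1}(D(G))\geq\lambda_{2}(D(G))\geq\cdots\geq\lambda_{n}(D(G))$. *)

From HB Require Import structures.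
From mathcomp Require Import all_boot all_order all_algebra.
From mathcomp Require Import polyrcf.
Set Implicit Arguments. Unset Strict Implicit. Unset Printing Implicit Defensive.
Import Order.TTheory GRing.Theory Num.Theory.
Local Open Scope ring_scope.

Definition simple_graph (n : nat) (e : rel 'I_n) : Prop :=
  symmetric e /\ irreflexive e.

Definition connected_graph (n : nat) (e : rel 'I_n) : Prop :=
  forall x y, connect e x y.

Definition walk_of_len (n : nat) (e : rel 'I_n) (x y : 'I_n) (k : nat) : bool :=
  [exists p : k.-tuple 'I_n, path e x p && (last x p == y)].

(* graph distance: least k < n with a walk of length k (well defined for
   connected graphs, where shortest walks have length <= n-1) *)
Definition gdist (n : nat) (e : rel 'I_n) (x y : 'I_n) : nat :=
  find (walk_of_len e x y) (iota 0 n).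

Definition dist_mx (R : nzRingType) (n : nat) (e : rel 'I_n) : 'M[R]_n :=
  \matrix_(i, j) (gdist e i j)%:R.

Definition eigenvalues (R : rcfType) (n : nat) (A : 'M[R]_n) : seq R :=
  let p := char_poly A in
  sort (fun x y : R => y <= x) (flatten [seq nseq (mup x p) x | x <- rootsR p]).

(* lambda_k(A), 1-indexed *)
Definition lambda (R : rcfType) (n : nat) (A : 'M[R]_n) (k : nat) : R :=
  nth 0 (eigenvalues A) k.-1.

Definition edge_rel (k : nat) (s : seq (nat * nat)) : rel 'I_k :=
  fun i j => (((i : nat), (j : nat)) \in s) || (((j : nat), (i : nat)) \in s).

Definition induced_sub (n k : nat) (e : rel 'I_n) (h : rel 'I_k) : Prop :=
  exists f : 'I_k -> 'I_n, injective f /\ forall i j, e (f i) (f j) = h i j.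

(* vertices v1..v5 are 0..4 *)
Definition C4 : rel 'I_4 := @edge_rel 4 [:: (0,1); (1,2); (2,3); (3,0)]%N.
Definition C5 : rel 'I_5 := @edge_rel 5 [:: (0,1); (1,2); (2,3); (3,4); (4,0)]%N.
Definition P5 : rel 'I_5 := @edge_rel 5 [:: (0,1); (1,2); (2,3); (3,4)]%N.
Definition H1 : rel 'I_4 := @edge_rel 4 [:: (0,1); (1,2); (2,3); (3,0); (0,2)]%N.
Definition H2 : rel 'I_5 := @edge_rel 5 [:: (0,1); (1,2); (2,3); (1,4)]%N.
Definition H3 : rel 'I_5 := @edge_rel 5 [:: (0,1); (1,2); (2,3); (0,4); (1,4)]%N.

From HB Require Import structures.
From mathcomp Require Import all_boot all_order all_algebra.
From mathcomp Require Import polyrcf complex ring lra zify.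
Set Implicit Arguments. Unset Strict Implicit. Unset Printing Implicit Defensive.
Import Order.TTheory GRing.Theory Num.Theory.
Local Open Scope ring_scope.

(* If lambda_2(D) <= c, then D - cI is negative semidefinite on the orthogonal
   complement of a single eigenvector, so it is positive definite on no plane.
   An induced copy of a small graph H fixes the distances in G between its
   vertices that are at most 2 in H; the others lie between 2 and their
   distance in H.  For every such completion of the distance matrix we give two
   integer vectors spanning a plane on which D - cI, with c = -0.569, is
   positive definite (checked in integer arithmetic), and
   (17 - sqrt 329) / 2 = -0.56918... < c. *)

Lemma count_mem_flatten_nseq (T : eqType) (m : T -> nat) (s : seq T) (x : T) :
  uniq s ->
  count_mem x (flatten [seq nseq (m y) y | y <- s]) = if x \in s then m x else 0%N.
Proof.
elim: s => [|y s IHs] //= /andP[ys us].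
rewrite count_cat IHs // count_nseq in_cons.
case: (eqVneq x y) => [->|xy] /=; first by rewrite eqxx (negbTE ys) mul1n addn0.
by rewrite eq_sym (negbTE xy) mul0n.
Qed.

Lemma perm_roots_prod_XsubC (R : rcfType) (n : nat) (r : 'I_n -> R) (p : {poly R}) :
  p = \prod_(i < n) ('X - (r i)%:P) ->
  perm_eq (flatten [seq nseq (mup x p) x | x <- rootsR p]) [seq r i | i <- enum 'I_n].
Proof.
rewrite -big_enum -(big_map r predT (fun y => 'X - y%:P)) => pE.
have p0 : p != 0 by rewrite pE monic_neq0 // monic_prod_XsubC.
apply/allP => x _; apply/eqP.
rewrite count_mem_flatten_nseq ?uniq_roots //.
rewrite -(roots_on_rootsR p0 x) in_itv /= {2}pE -mu_prod_XsubC -pE.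
by case: ifP => // /negbT /mupNroot ->.
Qed.

Lemma sorted_count_gt_le1 (R : realDomainType) (s : seq R) (c : R) :
  sorted (fun x y => y <= x) s -> s`_1 <= c -> (count (fun x => c < x)%R s <= 1)%N.
Proof.
case: s => [|a [|b t]] //=; first by case: (c < a).
move=> /andP[_ pt] bc.
have /allP tb := order_path_min (fun y x z (xy : y <= x) (zy : z <= y) => le_trans zy xy) pt.
have -> : count (fun x => c < x) t = 0%N.
  apply/eqP; rewrite -leqn0 leqNgt -has_count; apply/hasPn => x /tb xb.
  by rewrite -leNgt (le_trans xb).
by rewrite addn0 (ltNge c b) bc; case: (c < a).
Qed.

Lemma count_le1_eq (T : finType) (P : pred T) :
  (count P (enum T) <= 1)%N -> forall x y, P x -> P y -> x = y.
Proof.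
move=> cP x y Px Py; apply/eqP/negPn/negP => xy.
have : (size [:: x; y] <= count P (enum T))%N.
  rewrite -size_filter; apply: uniq_leq_size; first by rewrite /= inE xy.
  by move=> z; rewrite !inE mem_filter mem_enum andbT => /orP[] /eqP ->.
by move/leq_trans/(_ cP).
Qed.

Lemma exists_comb_vanishing (F : fieldType) (T : finType) (P : pred T) (al be : T -> F) :
  (count P (enum T) <= 1)%N ->
  exists a b, ((a != 0) || (b != 0)) /\ forall i, P i -> a * al i + b * be i = 0.
Proof.
move=> cP; case: (pickP P) => [j Pj|P0]; last first.
  by exists 1, 0; split=> [|i]; rewrite ?oner_neq0 ?P0.
have [/andP[/eqP al0 /eqP be0]|nz] := boolP ((al j == 0) && (be j == 0)).
  exists 1, 0; split=> [|i /(count_le1_eq cP Pj) <-]; first by rewrite oner_neq0.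
  by rewrite al0 mulr0 mul0r addr0.
exists (be j), (- al j); split; first by rewrite oppr_eq0 orbC -negb_and.
by move=> i /(count_le1_eq cP Pj) <-; rewrite mulrC mulNr addrN.
Qed.

Lemma char_poly_similar (R : comUnitRingType) (n : nat) (P A : 'M[R]_n) :
  P \in unitmx -> char_poly (invmx P *m A *m P) = char_poly A.
Proof.
move=> Pu; rewrite /char_poly /char_poly_mx.
have XE : ('X%:M : 'M[{poly R}]_n) = map_mx polyC (invmx P) *m 'X%:M *m map_mx polyC P.
  by rewrite mul_mx_scalar -scalemxAl -map_mxM mulVmx // map_mx1 scalemx1.
rewrite {1}XE !map_mxM -mulmxBl -mulmxBr !det_mulmx !det_map_mx.
by rewrite mulrAC -rmorphM -det_mulmx mulVmx // det1 rmorph1 mul1r.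
Qed.

Lemma hermitian_form_spectral (C : numClosedFieldType) (n : nat) (A : 'M[C]_n)
    (c : C) (w : 'rV[C]_n) :
  A \is hermsymmx ->
  let y := w *m (spectralmx A ^t*)%sesqui in
  (w *m (A - c%:M) *m (w ^t*)%sesqui) 0 0 =
    \sum_i (spectral_diag A 0 i - c) * (y 0 i * (y 0 i)^*).
Proof.
move=> hA y.
have /orthomx_spectralP AE := hermitian_normalmx hA.
set P := spectralmx A in AE y *; set d := spectral_diag A in AE *.
have Pu : P \is unitarymx by apply: spectral_unitarymx.
rewrite invmx_unitary // in AE.
have PtP : (P ^t*)%sesqui *m P = 1%:M.
  by rewrite -trmxC_unitary in Pu; have /unitarymxP := Pu; rewrite trmxCK.
have -> : A - c%:M = (P ^t*)%sesqui *m diag_mx (\row_i (d 0 i - c)) *m P.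
  have -> : diag_mx (\row_i (d 0 i - c)) = diag_mx d - c%:M.
    by apply/matrixP => i j; rewrite !mxE -mulrnBl.
  by rewrite mulmxBr mulmxBl -AE mul_mx_scalar -scalemxAl PtP scalemx1.
have yE : (y ^t*)%sesqui = P *m (w ^t*)%sesqui by rewrite trmx_mul map_mxM trmxCK.
rewrite !mulmxA -[_ *m P *m _]mulmxA -yE mxE.
apply: eq_bigr => i _; rewrite mul_mx_diag !mxE.
by rewrite [_ * (d 0 i - c)]mulrC -mulrA.
Qed.

Definition mxform (R : nzRingType) (n : nat) (M : 'M[R]_n) (x y : 'rV[R]_n) : R :=
  (x *m M *m y^T) 0 0.

Lemma mxform_sym (R : comNzRingType) (n : nat) (M : 'M[R]_n) (x y : 'rV[R]_n) :
  M^T = M -> mxform M y x = mxform M x y.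
Proof.
move=> MT; have trE (X : 'M[R]_1) : X 0 0 = X^T 0 0 by rewrite mxE.
by rewrite /mxform trE !trmx_mul trmxK MT mulmxA.
Qed.

Lemma mxform_comb (K : comNzRingType) (n : nat) (M : 'M[K]_n) (x y : 'rV[K]_n)
    (a b a' b' : K) :
  mxform M (a *: x + b *: y) (a' *: x + b' *: y) =
    a * a' * mxform M x x + a * b' * mxform M x y
    + b * a' * mxform M y x + b * b' * mxform M y y.
Proof.
rewrite /mxform linearD !linearZ /= !mulmxDl !mulmxDr -!scalemxAl -!scalemxAr.
move: (x *m M *m x^T) (x *m M *m y^T) (y *m M *m x^T) (y *m M *m y^T) => gxx gxy gyx gyy.
by rewrite !mxE !mulrA !addrA.
Qed.

Section Complexification.
Variable R : rcfType.
Local Notation toC := (map_mx (real_complex R)).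

Lemma conjC_real_complex (x : R) : (x%:C%C)^* = x%:C%C.
Proof. by apply: conj_Creal; rewrite -complexr0 complex_real. Qed.

Lemma mxform_complexified (n : nat) (M : 'M[R]_n) (x y : 'rV[R]_n) :
  mxform (toC M) (toC x) (toC y) = (mxform M x y)%:C%C.
Proof.
rewrite /mxform; have -> : toC x *m toC M *m (toC y)^T = toC (x *m M *m y^T).
  by rewrite !map_mxM map_trmx.
by rewrite mxE.
Qed.

Lemma hermitian_form_complexified (n : nat) (M : 'M[R]_n) (u v : 'rV[R]_n) (a b : R[i]) :
  let w := a *: toC u + b *: toC v in
  (w *m toC M *m (w ^t*)%sesqui) 0 0 =
    a * a^* * (mxform M u u)%:C%C + a * b^* * (mxform M u v)%:C%C
    + b * a^* * (mxform M v u)%:C%C + b * b^* * (mxform M v v)%:C%C.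
Proof.
move=> w; have -> : (w ^t*)%sesqui = (a^* *: toC u + b^* *: toC v)^T.
  by apply/matrixP => i j; rewrite !mxE rmorphD !rmorphM /= !conjC_real_complex.
by rewrite -/(mxform _ w _) mxform_comb !mxform_complexified.
Qed.

Lemma hermitian2_gt0 (g11 g12 g22 : R) (a b : R[i]) :
  0 < g11 -> g12 ^+ 2 < g11 * g22 -> (a != 0) || (b != 0) ->
  0 < a * a^* * g11%:C%C + a * b^* * g12%:C%C + b * a^* * g12%:C%C + b * b^* * g22%:C%C.
Proof.
move=> g11_gt0 det_gt0 ab0; set Q := _ + _.
have g11Q : g11%:C%C * Q = (a * g11%:C%C + b * g12%:C%C) * (a * g11%:C%C + b * g12%:C%C)^*
    + b * b^* * (g11 * g22 - g12 ^+ 2)%:C%C.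
  rewrite rmorphD !rmorphM /= !conjC_real_complex /Q rmorphB /= rmorphM /= rmorphXn /=.
  ring.
have g11C_gt0 : 0 < g11%:C%C :> R[i] by rewrite ltcR.
rewrite -(pmulr_rgt0 _ g11C_gt0) g11Q.
have [b0|b0] := eqVneq b 0.
  move: ab0; rewrite b0 eqxx orbF => a0.
  by rewrite !mul0r !addr0 mul_conjC_gt0 mulf_neq0 // gt_eqF.
by rewrite ltr_wpDl ?mul_conjC_ge0 // mulr_gt0 ?mul_conjC_gt0 // ltcR subr_gt0.
Qed.

End Complexification.

Section RealSymmetric.
Variables (R : rcfType) (n : nat) (A : 'M[R]_n).
Hypothesis symA : A^T = A.
Local Notation toC := (map_mx (real_complex R)).

Lemma hermsym_complexified : toC A \is hermsymmx.
Proof.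
apply/is_hermitianmxP; rewrite expr0 scale1r; apply/matrixP => i j.
by rewrite !mxE conjC_real_complex -{1}symA mxE.
Qed.

Let d := spectral_diag (toC A).
Let r i := complex.Re (d 0 i).

Lemma spectral_diag_complexifiedE i : d 0 i = (r i)%:C%C.
Proof.
by rewrite RRe_real // (mxOverP (hermitian_spectral_diag_real hermsym_complexified)).
Qed.

Lemma char_poly_real_symmetric : char_poly A = \prod_(i < n) ('X - (r i)%:P).
Proof.
apply: (@map_poly_inj _ _ (real_complex R)); rewrite map_char_poly.
have /orthomx_spectralP -> := hermitian_normalmx hermsym_complexified.
rewrite char_poly_similar ?spectral_unit // char_poly_trig ?diag_mx_is_trig //.
rewrite rmorph_prod; apply: eq_bigr => i _.
by rewrite mxE eqxx mulr1n spectral_diag_complexifiedE rmorphB /= map_polyX map_polyC.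
Qed.

Lemma count_eigenvalues_gt (c : R) :
  lambda A 2 <= c -> (count (fun i => c < r i)%R (enum 'I_n) <= 1)%N.
Proof.
rewrite /lambda /eigenvalues /= char_poly_real_symmetric => l2c.
have := sorted_count_gt_le1 (sort_sorted (fun x y => le_total y x) _) l2c.
rewrite (permP (permEl (perm_sort _ _))).
by rewrite (permP (perm_roots_prod_XsubC (erefl _))) count_map.
Qed.

Lemma lambda2_gt_of_posdef (c : R) (u v : 'rV[R]_n) :
  0 < mxform (A - c%:M) u u ->
  mxform (A - c%:M) u v ^+ 2 < mxform (A - c%:M) u u * mxform (A - c%:M) v v ->
  c < lambda A 2.
Proof.
move=> Muu_gt0 Muv_lt; rewrite ltNge; apply/negP => /count_eigenvalues_gt cnt.
pose y (x : 'rV[R[i]]_n) := x *m (spectralmx (toC A) ^t*)%sesqui.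
(* w below has no component along the eigenvectors whose eigenvalue exceeds c. *)
have [a [b [ab0 yab]]] :=
  exists_comb_vanishing (fun i => y (toC u) 0 i) (fun i => y (toC v) 0 i) cnt.
set w := a *: toC u + b *: toC v.
have yw i : y w 0 i = a * y (toC u) 0 i + b * y (toC v) 0 i.
  by rewrite /y mulmxDl -!scalemxAl !mxE.
have : 0 < (w *m toC (A - c%:M) *m (w ^t*)%sesqui) 0 0.
  rewrite hermitian_form_complexified (@mxform_sym _ _ _ u v) ?hermitian2_gt0 //.
  by rewrite linearB /= tr_scalar_mx symA.
rewrite map_mxB map_scalar_mx hermitian_form_spectral ?hermsym_complexified //.
move=> /lt_geF/negbT/negP; apply; apply: sumr_le0 => i _.
rewrite -/(y w) -/d spectral_diag_complexifiedE -rmorphB.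
have [cr|rc] := ltP c (r i); first by rewrite yw yab // mul0r mulr0.
by rewrite mulr_le0_ge0 ?mul_conjC_ge0 // -(rmorph0 (real_complex R)) lecR subr_le0.
Qed.

End RealSymmetric.

Section Distances.
Variables (n : nat) (e : rel 'I_n).

Lemma walk_of_len0 x y : walk_of_len e x y 0 = (x == y).
Proof.
apply/existsP/eqP => [[p]|->]; first by rewrite tuple0 /= => /eqP.
by exists [tuple]; rewrite /= eqxx.
Qed.

Lemma walk_of_len1 x y : walk_of_len e x y 1 = e x y.
Proof.
apply/existsP/idP => [[p]|exy].
  by case/tupleP: p => z p; rewrite tuple0 /= andbT => /andP[exz /eqP <-].
by exists [tuple y]; rewrite /= exy eqxx.
Qed.

Lemma walk_of_lenS x z y k : e x z -> walk_of_len e z y k -> walk_of_len e x y k.+1.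
Proof.
move=> exz /existsP[p /andP[pz py]]; apply/existsP; exists [tuple of z :: p].
by rewrite /= exz pz py.
Qed.

Lemma gdist_le x y k : walk_of_len e x y k -> (gdist e x y <= k)%N.
Proof.
move=> wk; rewrite /gdist; have [kn|nk] := ltnP k n; last first.
  by rewrite (leq_trans (find_size _ _)) ?size_iota.
rewrite leqNgt; apply/negP => /(before_find 0).
by rewrite nth_iota // add0n wk.
Qed.

Lemma gdist_ge x y m : (m <= n)%N ->
  (forall j, (j < m)%N -> ~~ walk_of_len e x y j) -> (m <= gdist e x y)%N.
Proof.
move=> mn nwalk; rewrite leqNgt; apply/negP => lt_m.
have lt_n := leq_trans lt_m mn.
have has_walk : has (walk_of_len e x y) (iota 0 n) by rewrite has_find size_iota.
by have := nth_find 0 has_walk; rewrite nth_iota // add0n (negbTE (nwalk _ lt_m)).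
Qed.

Hypothesis esym : symmetric e.

Lemma walk_of_len_sym x y k : walk_of_len e x y k -> walk_of_len e y x k.
Proof.
move=> /existsP[p /andP[px /eqP py]]; apply/existsP.
have sz : size (rev (belast x p)) == k by rewrite size_rev size_belast size_tuple.
exists (Tuple sz) => /=.
have esym' : (fun a b => e b a) =2 e by move=> a b; rewrite esym.
rewrite -py rev_path (eq_path esym') px /=.
by case: (tval p) => [|z s] /=; rewrite ?rev_cons ?last_rcons eqxx.
Qed.

Lemma gdist_sym x y : gdist e x y = gdist e y x.
Proof. by apply: eq_find => k; apply/idP/idP; apply: walk_of_len_sym. Qed.

End Distances.

(* D a b is 0 exactly when a = b, 1 exactly on edges, and otherwise one more than
   D m b for a neighbour m of a, so it is the length of a walk of H (in practice D
   is the distance matrix of H).  Vertices range over nat through inZp, not over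
   enum 'I_k.+1 (whose construction does not compute), so that [by []] checks it. *)
Definition dist_cert (k : nat) (H : rel 'I_k.+1) (D : nat -> nat -> nat) : bool :=
  let V := iota 0 k.+1 in
  all (fun a => all (fun b =>
    [&& (D a b == 0) == (a == b), (D a b == 1) == H (inZp a) (inZp b)
      & (1 < D a b)%N ==> has (fun m => H (inZp a) (inZp m) && (D m b == (D a b).-1)) V])
    V) V.

Definition completion (D U : nat -> nat -> nat) (a b : nat) : nat :=
  if (D a b <= 2)%N then D a b else if (a <= b)%N then U a b else U b a.

Section InducedCopy.
Variables (n k : nat) (e : rel 'I_n) (H : rel 'I_k.+1) (D : nat -> nat -> nat).
Variable f : 'I_k.+1 -> 'I_n.
Hypotheses (cert : dist_cert H D) (finj : injective f)
  (fe : forall i j, e (f i) (f j) = H i j).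

Lemma dist_certP (i j : 'I_k.+1) :
  [/\ (D i j == 0) = (i == j), (D i j == 1) = H i j
    & (1 < D i j)%N -> exists2 m : 'I_k.+1, H i m & D m j = (D i j).-1].
Proof.
have V_ord (l : 'I_k.+1) : val l \in iota 0 k.+1 by rewrite mem_iota ltn_ord.
move/allP/(_ _ (V_ord i))/allP/(_ _ (V_ord j)): cert.
rewrite !valZpK => /and3P[/eqP-> /eqP-> /implyP step]; split=> // /step/hasP[m].
rewrite mem_iota => /andP[_ mk] /andP[him /eqP Dmj].
by exists (inZp m); rewrite // /= modn_small.
Qed.

Lemma walk_of_len_cert (i j : 'I_k.+1) : walk_of_len e (f i) (f j) (D i j).
Proof.
move Dij : (D i j) => d; elim: d i Dij => [|[|d] IHd] i Dij;
  have [D0 D1 Dstep] := dist_certP i j; rewrite Dij in D0 D1 Dstep.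
- by move: D0; rewrite eqxx => /esym/eqP->; rewrite walk_of_len0.
- by rewrite walk_of_len1 fe -D1.
- by have [m him Dmj] := Dstep isT; apply: walk_of_lenS (IHd m Dmj); rewrite fe.
Qed.

Lemma gdist_cert_le (i j : 'I_k.+1) : (gdist e (f i) (f j) <= D i j)%N.
Proof. exact/gdist_le/walk_of_len_cert. Qed.

Lemma gdist_cert_ge (i j : 'I_k.+1) : (minn 2 (D i j) <= gdist e (f i) (f j))%N.
Proof.
have [D0 D1 _] := dist_certP i j.
have [Dij0|Dij_gt0] := posnP (D i j); first by rewrite Dij0.
have ij : (f i : nat) != f j.
  by rewrite val_eqE (inj_eq finj) -D0 -lt0n.
apply: gdist_ge => [|[|[|m]] lt_m].
- by move: (ltn_ord (f i)) (ltn_ord (f j)) ij; lia.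
- by rewrite walk_of_len0 -val_eqE.
- by rewrite walk_of_len1 fe -D1; apply/eqP; lia.
- by lia.
Qed.

Hypothesis esym : symmetric e.

Lemma gdist_completion (i j : 'I_k.+1) :
  gdist e (f i) (f j) = completion D (fun a b => gdist e (f (inZp a)) (f (inZp b))) i j.
Proof.
rewrite /completion; case: leqP => [Dij_le2|_].
  apply/eqP; rewrite eqn_leq gdist_cert_le /=.
  by rewrite -[X in (X <= _)%N](minn_idPr Dij_le2) gdist_cert_ge.
by case: leqP => _; rewrite !valZpK // gdist_sym.
Qed.

End InducedCopy.

(* q times the quadratic form of D - (r / q) I, in exact integer arithmetic. *)
Definition iqform (k : nat) (T : nat -> nat -> nat) (r : int) (q : nat) (x y : seq int) : int :=
  \sum_(0 <= a < k) \sum_(0 <= b < k) x`_a * y`_b * (q%:Z * (T a b)%:Z - r * (a == b)%:Z).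

Lemma mxform_dist_delta (R : numFieldType) (n k : nat) (e : rel 'I_n) (f : 'I_k -> 'I_n)
    (T : nat -> nat -> nat) (r : int) (q : nat) (x y : seq int) :
  injective f -> (forall i j, gdist e (f i) (f j) = T i j) -> q != 0%N ->
  q%:R * mxform (dist_mx R e - (r%:~R / q%:R)%:M)
    (\sum_(i < k) (x`_i)%:~R *: delta_mx 0 (f i)) (\sum_(i < k) (y`_i)%:~R *: delta_mx 0 (f i)) =
  (iqform k T r q x y)%:~R.
Proof.
move=> finj fT q0; rewrite /mxform /iqform big_mkord !mulmx_suml summxE mulr_sumr rmorph_sum.
apply: eq_bigr => i _; rewrite linear_sum mulmx_sumr summxE big_mkord mulr_sumr rmorph_sum.
apply: eq_bigr => j _.
rewrite linearZ /= -scalemxAr -!scalemxAl trmx_delta -rowE -colE !mxE fT (inj_eq finj).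
rewrite !rmorphM rmorphB /= rmorphM /= -!pmulrn intrM -pmulrn -mulr_natr.
by field; rewrite pnatr_eq0.
Qed.

Lemma lambda2_gt_of_table (R : rcfType) (n k : nat) (e : rel 'I_n) (f : 'I_k -> 'I_n)
    (T : nat -> nat -> nat) (r : int) (q : nat) (x y : seq int) :
  symmetric e -> injective f -> (forall i j, gdist e (f i) (f j) = T i j) -> (0 < q)%N ->
  let g := iqform k T r q in
  0 < g x x -> g x y ^+ 2 < g x x * g y y -> r%:~R / q%:R < lambda (dist_mx R e) 2.
Proof.
move=> esym finj fT q_gt0 g gxx_gt0 gxy_lt.
have qR_gt0 : 0 < q%:R :> R by rewrite ltr0n.
have qE := @mxform_dist_delta R n k e f T r q _ _ finj fT (lt0n_neq0 q_gt0).
pose vec (z : seq int) := \sum_(i < k) (z`_i)%:~R *: delta_mx 0 (f i) : 'rV[R]_n.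
apply: (@lambda2_gt_of_posdef _ _ _ _ _ (vec x) (vec y)); rewrite /vec.
- by apply/matrixP => i j; rewrite !mxE gdist_sym.
- by rewrite -(pmulr_rgt0 _ qR_gt0) qE ltr0z.
- rewrite -(ltr_pM2l (exprn_gt0 2 qR_gt0)) -exprMn [q%:R ^+ 2]expr2 mulrACA !qE.
  by rewrite -rmorphXn -rmorphM ltr_int.
Qed.

Lemma lambda2_gt_of_induced (R : rcfType) (n k : nat) (e : rel 'I_n) (H : rel 'I_k.+1)
    (D : nat -> nat -> nat) :
  symmetric e -> dist_cert H D -> induced_sub e H ->
  exists2 U : nat -> nat -> nat,
    (forall a b, a <= k -> b <= k -> minn 2 (D a b) <= U a b <= D a b)%N &
    forall (r : int) (q : nat) (x y : seq int), (0 < q)%N ->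
      let g := iqform k.+1 (completion D U) r q in
      0 < g x x -> g x y ^+ 2 < g x x * g y y -> r%:~R / q%:R < lambda (dist_mx R e) 2.
Proof.
move=> esym cert [f [finj fe]].
exists (fun a b => gdist e (f (inZp a)) (f (inZp b))) => [a b ak bk | r q x y].
  have := gdist_cert_le cert fe (inZp a) (inZp b).
  have := gdist_cert_ge cert finj fe (inZp a) (inZp b).
  by rewrite /= !modn_small // => -> ->.
exact: lambda2_gt_of_table esym finj (gdist_completion cert finj fe esym).
Qed.

Definition table (T : seq (seq nat)) (a b : nat) : nat := nth 0 (nth [::] T a) b.

(* -0.569, a rational just above (17 - sqrt 329) / 2 = -0.56918... *)
Definition c0 (R : rcfType) : R := (-569)%:~R / 1000%:R.

Lemma threshold_le_c0 (R : rcfType) : (17 - Num.sqrt 329) / 2 <= c0 R.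
Proof.
have sqrt_ge0 : 0 <= Num.sqrt (329 : R) := sqrtr_ge0 _.
have sqrt_sq : Num.sqrt (329 : R) ^+ 2 = 329 by rewrite sqr_sqrtr // ler0n.
rewrite /c0 mulrNz -pmulrn; nra.
Qed.

Ltac iqform_lia :=
  rewrite /iqform /completion /table unlock /=;
  repeat match goal with
  | h : ?U _ _ = _ |- _ => match type of U with nat -> nat -> nat => rewrite h; clear h end
  end;
  lia.

Lemma P5_dist_cert : dist_cert P5 (table
  [:: [:: 0; 1; 2; 3; 4]; [:: 1; 0; 1; 2; 3]; [:: 2; 1; 0; 1; 2]; [:: 3; 2; 1; 0; 1];
      [:: 4; 3; 2; 1; 0]]%N).
Proof. by []. Qed.

Lemma induced_P5_lambda2_gt (R : rcfType) (n : nat) (e : rel 'I_n) :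
  symmetric e -> induced_sub e P5 -> c0 R < lambda (dist_mx R e) 2.
Proof.
move=> esym /(lambda2_gt_of_induced R esym P5_dist_cert) [U bU /(_ (-569) 1000%N) test].
have := (bU 0 3 isT isT)%N; have := (bU 0 4 isT isT)%N; have := (bU 1 4 isT isT)%N.
rewrite /table /= => b14 b04 b03.
have [u03|u03] : (U 0 3 = 2 \/ U 0 3 = 3)%N by lia.
all: have [u04|[u04|u04]] : (U 0 4 = 2 \/ U 0 4 = 3 \/ U 0 4 = 4)%N by lia.
all: have [u14|u14] : (U 1 4 = 2 \/ U 1 4 = 3)%N by lia.
- by apply: (test [:: 1; 1; 1; 1; 1] [:: 0; -1; 1; -1; 0] isT); iqform_lia.
- by apply: (test [:: 1; 1; 1; 1; 1] [:: 1; -1; 1; 0; 0] isT); iqform_lia.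
- by apply: (test [:: 1; 0; 0; 0; 1] [:: 0; -1; 0; -1; 0] isT); iqform_lia.
- by apply: (test [:: 1; 1; 1; 1; 1] [:: 1; -1; 1; -1; 0] isT); iqform_lia.
- by apply: (test [:: 1; 0; 0; 0; 1] [:: 0; -1; 0; -1; 0] isT); iqform_lia.
- by apply: (test [:: 1; 1; 1; 1; 1] [:: 1; -1; 1; -1; 0] isT); iqform_lia.
- by apply: (test [:: 1; 1; 1; 1; 1] [:: 0; 0; 1; -1; 1] isT); iqform_lia.
- by apply: (test [:: 1; 1; 1; 1; 1] [:: -1; 1; 0; -1; 1] isT); iqform_lia.
- by apply: (test [:: 1; 1; 1; 1; 1] [:: 0; -1; 1; -1; 1] isT); iqform_lia.
- by apply: (test [:: 1; 1; 1; 1; 1] [:: -1; 1; 0; -1; 1] isT); iqform_lia.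
- by apply: (test [:: 1; 1; 1; 1; 1] [:: 0; -1; 1; -1; 1] isT); iqform_lia.
- by apply: (test [:: 2; 1; 1; 1; 2] [:: 0; -2; 2; -2; 0] isT); iqform_lia.
Qed.

Lemma C4_dist_cert : dist_cert C4 (table
  [:: [:: 0; 1; 2; 1]; [:: 1; 0; 1; 2]; [:: 2; 1; 0; 1]; [:: 1; 2; 1; 0]]%N).
Proof. by []. Qed.

Lemma induced_C4_lambda2_gt (R : rcfType) (n : nat) (e : rel 'I_n) :
  symmetric e -> induced_sub e C4 -> c0 R < lambda (dist_mx R e) 2.
Proof.
move=> esym /(lambda2_gt_of_induced R esym C4_dist_cert) [U _ /(_ (-569) 1000%N) test].
by apply: (test [:: 1; 1; 1; 1] [:: -1; 1; -1; 1] isT); iqform_lia.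
Qed.

Lemma C5_dist_cert : dist_cert C5 (table
  [:: [:: 0; 1; 2; 2; 1]; [:: 1; 0; 1; 2; 2]; [:: 2; 1; 0; 1; 2]; [:: 2; 2; 1; 0; 1];
      [:: 1; 2; 2; 1; 0]]%N).
Proof. by []. Qed.

Lemma induced_C5_lambda2_gt (R : rcfType) (n : nat) (e : rel 'I_n) :
  symmetric e -> induced_sub e C5 -> c0 R < lambda (dist_mx R e) 2.
Proof.
move=> esym /(lambda2_gt_of_induced R esym C5_dist_cert) [U _ /(_ (-569) 1000%N) test].
by apply: (test [:: 1; 1; 1; 1; 1] [:: 0; -1; 1; -1; 0] isT); iqform_lia.
Qed.

Lemma H1_dist_cert : dist_cert H1 (table
  [:: [:: 0; 1; 1; 1]; [:: 1; 0; 1; 2]; [:: 1; 1; 0; 1]; [:: 1; 2; 1; 0]]%N).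
Proof. by []. Qed.

Lemma induced_H1_lambda2_gt (R : rcfType) (n : nat) (e : rel 'I_n) :
  symmetric e -> induced_sub e H1 -> c0 R < lambda (dist_mx R e) 2.
Proof.
move=> esym /(lambda2_gt_of_induced R esym H1_dist_cert) [U _ /(_ (-569) 1000%N) test].
by apply: (test [:: 0; 1; 0; 1] [:: 1; 0; 1; 0] isT); iqform_lia.
Qed.

Lemma H2_dist_cert : dist_cert H2 (table
  [:: [:: 0; 1; 2; 3; 2]; [:: 1; 0; 1; 2; 1]; [:: 2; 1; 0; 1; 2]; [:: 3; 2; 1; 0; 3];
      [:: 2; 1; 2; 3; 0]]%N).
Proof. by []. Qed.

Lemma induced_H2_lambda2_gt (R : rcfType) (n : nat) (e : rel 'I_n) :
  symmetric e -> induced_sub e H2 -> c0 R < lambda (dist_mx R e) 2.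
Proof.
move=> esym /(lambda2_gt_of_induced R esym H2_dist_cert) [U bU /(_ (-569) 1000%N) test].
have := (bU 0 3 isT isT)%N; have := (bU 3 4 isT isT)%N; rewrite /table /= => b34 b03.
have [u03|u03] : (U 0 3 = 2 \/ U 0 3 = 3)%N by lia.
all: have [u34|u34] : (U 3 4 = 2 \/ U 3 4 = 3)%N by lia.
- by apply: (test [:: 1; 1; 1; 1; 1] [:: 0; -1; 1; -1; 0] isT); iqform_lia.
- by apply: (test [:: 1; 1; 1; 1; 1] [:: 1; -1; 1; -1; 0] isT); iqform_lia.
- by apply: (test [:: 1; 1; 1; 1; 1] [:: 0; -1; 1; -1; 1] isT); iqform_lia.
- by apply: (test [:: 1; 1; 1; 1; 1] [:: 0; -2; 1; -1; 0] isT); iqform_lia.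
Qed.

Lemma H3_dist_cert : dist_cert H3 (table
  [:: [:: 0; 1; 2; 3; 1]; [:: 1; 0; 1; 2; 1]; [:: 2; 1; 0; 1; 2]; [:: 3; 2; 1; 0; 3];
      [:: 1; 1; 2; 3; 0]]%N).
Proof. by []. Qed.

Lemma induced_H3_lambda2_gt (R : rcfType) (n : nat) (e : rel 'I_n) :
  symmetric e -> induced_sub e H3 -> c0 R < lambda (dist_mx R e) 2.
Proof.
move=> esym /(lambda2_gt_of_induced R esym H3_dist_cert) [U bU /(_ (-569) 1000%N) test].
have := (bU 0 3 isT isT)%N; have := (bU 3 4 isT isT)%N; rewrite /table /= => b34 b03.
have [u03|u03] : (U 0 3 = 2 \/ U 0 3 = 3)%N by lia.
all: have [u34|u34] : (U 3 4 = 2 \/ U 3 4 = 3)%N by lia.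
- by apply: (test [:: 1; 1; 1; 1; 1] [:: 0; -1; 1; -1; 0] isT); iqform_lia.
- by apply: (test [:: 1; 1; 1; 1; 1] [:: 1; -1; 1; -1; 0] isT); iqform_lia.
- by apply: (test [:: 1; 1; 1; 1; 1] [:: 0; -1; 1; -1; 1] isT); iqform_lia.
(* lambda_2 of this completion is -0.5686..., barely above c0. *)
- by apply: (test [:: 46; 34; 39; 55; 46] [:: 15; -69; 63; -27; 15] isT); iqform_lia.
Qed.

Theorem lemma2p5 (R : rcfType) (n : nat) (e : rel 'I_n) :
  simple_graph e -> connected_graph e ->
  lambda (dist_mx R e) 2 <= (17 - Num.sqrt 329) / 2 ->
  ~ induced_sub e C4 /\ ~ induced_sub e C5 /\ ~ induced_sub e P5 /\
  ~ induced_sub e H1 /\ ~ induced_sub e H2 /\ ~ induced_sub e H3.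
Proof.
move=> [esym _] _ l2_le.
have no_copy k (H : rel 'I_k) : (induced_sub e H -> c0 R < lambda (dist_mx R e) 2) ->
    ~ induced_sub e H.
  by move=> gt_l2 /gt_l2; rewrite ltNge (le_trans l2_le (threshold_le_c0 R)).
split; first exact/no_copy/induced_C4_lambda2_gt.
split; first exact/no_copy/induced_C5_lambda2_gt.
split; first exact/no_copy/induced_P5_lambda2_gt.
split; first exact/no_copy/induced_H1_lambda2_gt.
split; first exact/no_copy/induced_H2_lambda2_gt.
exact/no_copy/induced_H3_lambda2_gt.
Qed.
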